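(* Let $g\colon A\to D$ be an epimorphism from a finitely generated lattice $A$ onto a lattice $D$ with finite generating set $P$ for which $D$ satisfies Dean's condition (D). Then $g$ is lower bounded if and only if for every $p\in P$ the preimage $g^{-1}(p)$ has a least element.
   Context: A lattice homomorphism $g\colon A\to D$ is lower bounded if for every $d\in D$ the set $\{x\in A: g(x)\ge d\}$ is empty or has a least element (for surjective $g$: every preimage $g^{-1}(d)$ has a least element). Dean's condition (D) for $D$ with finite generating set $P$: for all finite $S,T\subseteq D$ with $\bigwedge S\le\bigvee T$, either some $s\in S$ has $s\le\bigvee T$, or some $t\in T$ has $\bigwedge S\le t$, or some $p\in P$ has $\bigwedge S\le p\le\bigvee T$. *)

From HB Require Import structures.
From mathcomp Require Import all_boot all_order.
Set Implicit Arguments. Unset Strict Implicit. Unset Printing Implicit Defensive.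
Import Order.TTheory.
Local Open Scope order_scope.

Inductive generated {d : Order.disp_t} {T : latticeType d} (P : seq T) : T -> Prop :=
| gen_base x : x \in P -> generated P x
| gen_meet x y : generated P x -> generated P y -> generated P (x `&` y)
| gen_join x y : generated P x -> generated P y -> generated P (x `|` y).

Definition generates {d : Order.disp_t} {T : latticeType d} (P : seq T) : Prop :=
  forall x : T, generated P x.

Definition finitely_generated {d : Order.disp_t} (T : latticeType d) : Prop :=
  exists P : seq T, generates P.

Definition lattice_hom {d1 d2 : Order.disp_t} {A : latticeType d1} {D : latticeType d2}
  (g : A -> D) : Prop :=
  forall x y : A, g (x `&` y) = g x `&` g y /\ g (x `|` y) = g x `|` g y.

Definition least_of {d : Order.disp_t} {T : latticeType d} (Q : T -> Prop) (x : T) : Prop :=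
  Q x /\ forall y, Q y -> x <= y.

Definition lower_bounded {d1 d2 : Order.disp_t} {A : latticeType d1} {D : latticeType d2}
  (g : A -> D) : Prop :=
  forall e : D, (forall x : A, ~ (e <= g x)) \/ exists x : A, least_of (fun y => e <= g y) x.

Definition smeet {d : Order.disp_t} {T : latticeType d} (x : T) (s : seq T) : T :=
  foldr Order.meet x s.
Definition sjoin {d : Order.disp_t} {T : latticeType d} (x : T) (s : seq T) : T :=
  foldr Order.join x s.

(* Dean's condition (D) for the generating set P; S = s0::s, T = t0::t are
   arbitrary nonempty finite subsets. *)
Definition dean {d : Order.disp_t} {D : latticeType d} (P : seq D) : Prop :=
  forall (s0 : D) (s : seq D) (t0 : D) (t : seq D),
    smeet s0 s <= sjoin t0 t ->
    (exists2 u, u \in s0 :: s & u <= sjoin t0 t) \/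
    (exists2 v, v \in t0 :: t & smeet s0 s <= v) \/
    (exists2 p, p \in P & (smeet s0 s <= p) && (p <= sjoin t0 t)).

From HB Require Import structures.
From mathcomp Require Import all_boot all_order.
Import Order.TTheory.
Local Open Scope order_scope.

(* Proof idea.  "Lower bounded" restricts to the fibres over [P] trivially:
   for a surjective homomorphism, the least element of [{x | e <= g x}] is
   also the least element of the fibre [g^-1(e)].  Conversely, assume every
   fibre over [p \in P] has a least element [b_p]; then [b_p] is also least in
   [{x | p <= g x}].  We show that [{x | e <= g x}] has a least element for
   every [e : D], by induction on how [e] is generated from [P]:
   - joins are easy: if [z1], [z2] are least above [e1], [e2], then
     [z1 `|` z2] is least above [e1 `|` e2];
   - for meets, let [z] be the meet of [z1 `&` z2] with all elements [x] of
     the finite set [X ++ [b_p | p \in P]] satisfying [e1 `&` e2 <= g x],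
     where [X] generates [A].  We check [z <= y] for every [y] above
     [e1 `&` e2] by induction on how [y] is generated from [X]; the only
     nontrivial case [y = y1 `|` y2] is exactly Dean's condition (D) applied
     to [e1 `&` e2 <= g y1 `|` g y2]. *)

Section LatticeFacts.
Context {d : Order.disp_t} {T : latticeType d}.

Lemma meet_below_list (Q : pred T) (L : seq T) (z0 : T) :
  (forall x y, Q x -> Q y -> Q (x `&` y)) -> Q z0 ->
  exists z, [/\ Q z, z <= z0 & forall b, b \in L -> Q b -> z <= b].
Proof.
move=> Qmeet Qz0; elim: L => [|b L [z [Qz zz0 zL]]]; first by exists z0.
case Qb: (Q b).
  exists (z `&` b); split; [exact: Qmeet | exact: leIxl |].
  move=> c; rewrite inE => /orP[/eqP -> _|cL Qc]; first exact: leIr.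
  exact/leIxl/zL.
by exists z; split => // c; rewrite inE => /orP[/eqP ->|/zL]; rewrite ?Qb.
Qed.

Lemma generated_below (X : seq T) (U : T -> Prop) (z : T) :
  generates X ->
  (forall x, x \in X -> U x -> z <= x) ->
  (forall y1 y2, U (y1 `&` y2) -> U y1 /\ U y2) ->
  (forall y1 y2, (U y1 -> z <= y1) -> (U y2 -> z <= y2) ->
     U (y1 `|` y2) -> z <= y1 `|` y2) ->
  forall y, U y -> z <= y.
Proof.
move=> genX Ugen Umeet Ujoin y; elim: (genX y) => {y} [x /Ugen //|y1 y2 _ IH1 _ IH2|].
  by move=> /Umeet[U1 U2]; rewrite lexI IH1 ?IH2.
by move=> y1 y2 _ IH1 _ IH2; apply: Ujoin.
Qed.

End LatticeFacts.

Lemma seq_choice (I V : eqType) (R : I -> V -> Prop) (s : seq I) :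
  (forall i, i \in s -> exists v, R i v) ->
  exists L : seq V, forall i, i \in s -> exists2 v, v \in L & R i v.
Proof.
elim: s => [|i s IH] Hs; first by exists [::].
have [L HL] : exists L : seq V, forall j, j \in s -> exists2 v, v \in L & R j v.
  by apply: IH => j js; apply: Hs; rewrite inE js orbT.
have [v Rv] := Hs i (mem_head _ _).
exists (v :: L) => j; rewrite inE => /orP[/eqP ->|/HL[w wL Rw]].
  by exists v; rewrite ?mem_head.
by exists w; rewrite // inE wL orbT.
Qed.

Section LatticeHom.
Context {dA dD : Order.disp_t} {A : latticeType dA} {D : latticeType dD}.
Variable g : A -> D.
Hypothesis hom_g : lattice_hom g.

Lemma hom_meet (x y : A) : g (x `&` y) = g x `&` g y.
Proof. by have [] := hom_g x y. Qed.

Lemma hom_join (x y : A) : g (x `|` y) = g x `|` g y.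
Proof. by have [] := hom_g x y. Qed.

Lemma hom_mono (x y : A) : x <= y -> g x <= g y.
Proof. by move=> /join_r xy; rewrite -xy hom_join leUl. Qed.

Definition least_above (e : D) (z : A) : Prop := least_of (fun y => e <= g y) z.

Lemma fibre_least_above (e : D) (x : A) :
  least_of (fun y => g y = e) x -> least_above e x.
Proof.
move=> [gx xmin]; split=> [|y ey]; first by rewrite gx.
apply: le_trans (xmin (x `&` y) _) (leIr _ _).
by rewrite hom_meet gx (meet_l ey).
Qed.

Lemma least_above_fibre (e : D) (x0 m : A) :
  g x0 = e -> least_above e m -> least_of (fun y => g y = e) m.
Proof.
move=> gx0 [em mmin]; split=> [|y gy]; last by apply: mmin; rewrite gy.
have mx0 : m <= x0 by apply: mmin; rewrite gx0.
by apply/eqP; rewrite eq_le em andbT -gx0 hom_mono.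
Qed.

Lemma least_above_join (e1 e2 : D) (z1 z2 : A) :
  least_above e1 z1 -> least_above e2 z2 -> least_above (e1 `|` e2) (z1 `|` z2).
Proof.
move=> [ez1 min1] [ez2 min2]; split; first by rewrite hom_join leU2.
by move=> y; rewrite !leUx => /andP[/min1 -> /min2 ->].
Qed.

Lemma least_above_meet (X : seq A) (P : seq D) (Bp : seq A)
    (e1 e2 : D) (z1 z2 : A) :
  generates X -> dean P ->
  (forall p, p \in P -> exists2 b, b \in Bp & least_above p b) ->
  least_above e1 z1 -> least_above e2 z2 ->
  exists z, least_above (e1 `&` e2) z.
Proof.
move=> genX deanP HBp [ez1 min1] [ez2 min2].
set e := e1 `&` e2.
have ez12 : e <= g (z1 `&` z2) by rewrite hom_meet leI2.
have upmeet x y : e <= g x -> e <= g y -> e <= g (x `&` y).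
  by rewrite hom_meet lexI => -> ->.
have [z [ez zz12 zL]] := @meet_below_list _ _ [pred y | e <= g y] (X ++ Bp) _ upmeet ez12.
exists z; split=> //; apply: (@generated_below _ _ X (fun y => e <= g y) z genX).
- by move=> x xX; apply: zL; rewrite mem_cat xX.
- by move=> y1 y2; rewrite hom_meet lexI => /andP[].
move=> y1 y2 IH1 IH2; rewrite hom_join => ey.
have := deanP e1 [:: e2] (g y1) [:: g y2].
rewrite /smeet /sjoin /= meetC joinC => /(_ ey).
case=> [[u]|[[v]|[p pP /andP[ep py]]]].
- (* some [e_i <= g y1 `|` g y2]: then [z <= z_i <= y1 `|` y2] *)
  rewrite !inE => /orP[] /eqP -> uy; apply: (le_trans zz12).
    by apply/leIxl/min1; rewrite hom_join.
  by apply/leIxr/min2; rewrite hom_join.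
- (* [e <= g y_i]: then [z <= y_i] by induction *)
  rewrite !inE => /orP[] /eqP -> ev.
    exact: le_trans (IH1 ev) (leUl _ _).
  exact: le_trans (IH2 ev) (leUr _ _).
- (* [e <= p <= g (y1 `|` y2)]: then [z <= b_p <= y1 `|` y2] *)
  have [b bB [pb bmin]] := HBp p pP.
  apply: (le_trans (zL b _ _)); first by rewrite mem_cat bB orbT.
    exact: le_trans ep pb.
  by apply: bmin; rewrite hom_join.
Qed.

End LatticeHom.

Theorem mainTheorem11 (dA dD : Order.disp_t) (A : latticeType dA) (D : latticeType dD)
  (g : A -> D) (P : seq D) :
  lattice_hom g -> (forall e : D, exists x : A, g x = e) ->
  finitely_generated A -> generates P -> dean P ->
  (lower_bounded g <-> forall p, p \in P -> exists x : A, least_of (fun y => g y = p) x).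
Proof.
move=> hom_g onto [X genX] genP deanP; split.
  move=> lb p _; have [x0 gx0] := onto p.
  case: (lb p) => [/(_ x0)|[m mleast]]; first by rewrite gx0.
  by exists m; exact: least_above_fibre gx0 mleast.
move=> fibres.
have [Bp HBp] : exists Bp : seq A,
    forall p, p \in P -> exists2 b, b \in Bp & least_above g p b.
  apply: seq_choice => p /fibres[x xleast].
  by exists x; exact: fibre_least_above.
suff least_ex e : exists z, least_above g e z.
  by move=> e; right; exact: least_ex.
elim: (genP e) => {e} [p pP | e1 e2 _ [z1 H1] _ [z2 H2] | e1 e2 _ [z1 H1] _ [z2 H2]].
- by have [b _ bleast] := HBp p pP; exists b.
- exact: least_above_meet genX deanP HBp H1 H2.
- by exists (z1 `|` z2); exact: least_above_join.
Qed.
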